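(* Let $V$ be a vertex algebra and $M$ a subspace of $V$ containing $C_2(V)$ such that $M/C_2(V)$ is an ideal of the commutative associative algebra $V/C_2(V)$. Then $M$ is an $MZ_{0,-1}$-subspace of $V$.
   Context: A vertex algebra $(V,Y,\mathbf{1})$ is over $\mathbb{C}$; for $u\in V$ write $Y(u,z)=\sum_{n\in\mathbb{Z}}u_nz^{-n-1}$ with $u_n\in\operatorname{End}V$. Iterated products are nested to the right: $v_{n_1}\cdots v_{n_t}v=v_{n_1}(\cdots(v_{n_t}v))$. $C_2(V)=\operatorname{span}_{\mathbb{C}}\{u_{-2}v: u,v\in V\}$; $V/C_2(V)$ is a commutative associative unital algebra with product $(a+C_2(V))(b+C_2(V))=a_{-1}b+C_2(V)$. For a subspace $M\subseteq V$: $r_{0,-1}(M)$ is the set of $v\in V$ for which there is $m\ge 0$ with $v_{n_1}\cdots v_{n_t}v\in M$ for all $t\ge m$ and all $n_1,\dots,n_t\in\{0,-1\}$. $lsr_{0,-1}(M)$ is the set of $v\in V$ such that for every $b\in V$ there is $m\ge0$ with $b_sv_{n_1}\cdots v_{n_t}v\in M$ for all $t\ge m$ and all $s,n_1,\dots,n_t\in\{0,-1\}$. $rsr_{0,-1}(M)$ is the set of $v\in V$ such that for every $w\in V$ there is $m\ge 0$ with $(v_{n_1}\cdots v_{n_t}v)_nw\in M$ for all $t\ge m$ and all $n,n_1,\dots,n_t\in\{0,-1\}$. $sr_{0,-1}(M)=lsr_{0,-1}(M)\cap rsr_{0,-1}(M)$. $M$ is an $MZ_{0,-1}$-subspace of $V$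 if $r_{0,-1}(M)=sr_{0,-1}(M)$. *)

From HB Require Import structures.
From mathcomp Require Import all_boot all_order all_algebra complex.
From mathcomp Require Import Rstruct.
Set Implicit Arguments. Unset Strict Implicit. Unset Printing Implicit Defensive.
Import Order.TTheory GRing.Theory Num.Theory.
Local Open Scope ring_scope.

Definition CC : numClosedFieldType := (Rdefinitions.R)[i].

(* Generalized binomial coefficient binom(k, i) for k : int, i : nat,
   = k (k-1) ... (k-i+1) / i!.  For k = -(a+1) < 0 it equals (-1)^i C(a+i,i). *)
Definition binz (k : int) (i : nat) : int :=
  match k with
  | Posz a => ('C(a, i))%:Z
  | Negz a => (-1) ^+ i * ('C(a + i, i))%:Z
  end.

(* The n-th mode  u_n v  is  Y u v n, i.e. Y(u,z) = sum_n u_n z^{-n-1}. *)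
Section VA.
Variable V : lmodType CC.
Variable Y : V -> V -> int -> V.
Variable vac : V.

Definition va_linear : Prop :=
  (forall (a : CC) u u' v n, Y (a *: u + u') v n = a *: Y u v n + Y u' v n) /\
  (forall (a : CC) u v v' n, Y u (a *: v + v') n = a *: Y u v n + Y u v' n).

Definition va_truncation : Prop :=
  forall u v, exists N : int, forall n : int, N <= n -> Y u v n = 0.

Definition va_vacuum : Prop :=
  forall v n, Y vac v n = if n == -1 then v else 0.

Definition va_creation : Prop :=
  forall u, Y u vac (-1) = u /\ (forall n : int, 0 <= n -> Y u vac n = 0).

(* All sums are finite; we evaluate them as sums over i < N for any N beyond
   which all three families u_{k+i} v, v_{n+i} w, u_{m+i} w vanish. *)
Definition va_borcherds : Prop :=
  forall (u v w : V) (m k n : int) (N : nat),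
    (forall i : nat, (N <= i)%N ->
        [/\ Y u v (k + i%:Z) = 0, Y v w (n + i%:Z) = 0 & Y u w (m + i%:Z) = 0]) ->
    \sum_(i < N) Y (Y u v (k + i%:Z)) w (m + n - i%:Z) *~ binz m i
    = \sum_(i < N)
        ((Y u (Y v w (n + i%:Z)) (m + k - i%:Z)
          - (Y v (Y u w (m + i%:Z)) (n + k - i%:Z)) *~ ((-1) ^ k))
         *~ ((-1) ^+ i * binz k i)).

Definition is_vertex_algebra : Prop :=
  [/\ va_linear, va_truncation, va_vacuum, va_creation & va_borcherds].

Definition is_subspace (M : V -> Prop) : Prop :=
  M 0 /\ forall (a : CC) x y, M x -> M y -> M (a *: x + y).

Definition C2 (x : V) : Prop :=
  exists s : seq (CC * V * V),
    x = \sum_(t <- s) t.1.1 *: Y t.1.2 t.2 (-2).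

(* M/C_2(V) is an ideal of the commutative algebra V/C_2(V), whose product is
   (a + C_2)(b + C_2) = a_{-1} b + C_2 : for all a in V and m in M, the class
   of a_{-1} m lies in M/C_2, i.e. a_{-1} m is congruent mod C_2 to an element of M. *)
Definition quotient_ideal (M : V -> Prop) : Prop :=
  forall a m, M m -> exists m', M m' /\ C2 (Y a m (-1) - m').

Definition iter_prod (v : V) (ns : seq int) : V :=
  foldr (fun n x => Y v x n) v ns.

Definition in01 (n : int) : bool := (n == 0) || (n == -1).

Definition r01 (M : V -> Prop) (v : V) : Prop :=
  exists m : nat, forall ns : seq int, all in01 ns -> (m <= size ns)%N ->
    M (iter_prod v ns).

Definition lsr01 (M : V -> Prop) (v : V) : Prop :=
  forall b : V, exists m : nat, forall (s : int) (ns : seq int),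
    in01 s -> all in01 ns -> (m <= size ns)%N -> M (Y b (iter_prod v ns) s).

Definition rsr01 (M : V -> Prop) (v : V) : Prop :=
  forall w : V, exists m : nat, forall (n : int) (ns : seq int),
    in01 n -> all in01 ns -> (m <= size ns)%N -> M (Y (iter_prod v ns) w n).

Definition sr01 (M : V -> Prop) (v : V) : Prop := lsr01 M v /\ rsr01 M v.

Definition MZ01_subspace (M : V -> Prop) : Prop :=
  forall v, r01 M v <-> sr01 M v.

End VA.

From HB Require Import structures.
From mathcomp Require Import all_boot all_order all_algebra complex zify.
Set Implicit Arguments. Unset Strict Implicit. Unset Printing Implicit Defensive.
Import Order.TTheory GRing.Theory Num.Theory.
Local Open Scope ring_scope.

(* Modulo C_2(V) the (-1)-product is commutative and associative, every 0-mode
   b_0 acts on it as a derivation, and C_2(V) is stable under all modes u_n with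
   n <= 0, applied on either side.  Since v_0 v is in C_2(V), a nested product
   v_{n_1} ... v_{n_t} v with some n_i = 0 therefore lies in C_2(V); otherwise
   it is the power v^{t+1}.  If these powers lie in M for large t, so do
   b_{-1} v^{t+1} and (v^{t+1})_{-1} w, because M/C_2(V) is an ideal, and so
   does b_0 v^{t+2} = (t+2) (b_0 v) v^{t+1} (mod C_2(V)); skew symmetry turns
   (v^{t+1})_0 w into -w_0 v^{t+1}.  Conversely, taking b to be the vacuum in
   the left condition gives back the r_{0,-1} condition. *)

Section Subspace.
Variables (V : lmodType CC) (P : V -> Prop).
Hypothesis HP : is_subspace P.

Lemma subspace0 : P 0.
Proof. by case: HP. Qed.

Lemma subspaceD x y : P x -> P y -> P (x + y).
Proof. by case: HP => _ HPZD Px Py; have := HPZD 1 x y Px Py; rewrite scale1r. Qed.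

Lemma subspaceZ a x : P x -> P (a *: x).
Proof. by case: HP => P0 HPZD Px; have := HPZD a x 0 Px P0; rewrite addr0. Qed.

Lemma subspaceN x : P x -> P (- x).
Proof. by move=> Px; rewrite -scaleN1r; apply: subspaceZ. Qed.

Lemma subspaceB x y : P x -> P y -> P (x - y).
Proof. by move=> Px Py; apply/subspaceD/subspaceN. Qed.

Lemma subspaceMz x z : P x -> P (x *~ z).
Proof. by move=> Px; rewrite -scaler_int; apply: subspaceZ. Qed.

Lemma subspaceMn x n : P x -> P (x *+ n).
Proof. by move=> Px; rewrite -scaler_nat; apply: subspaceZ. Qed.

Lemma subspaceMn_inv x n : P (x *+ n.+1) -> P x.
Proof.
move=> Pxn; rewrite -[x]scale1r -(mulVf (_ : n.+1%:R != 0 :> CC)) ?pnatr_eq0 //.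
by rewrite -scalerA scaler_nat; apply: subspaceZ.
Qed.

Lemma subspace_sum N (F : 'I_N -> V) : (forall i, P (F i)) -> P (\sum_(i < N) F i).
Proof. by move=> PF; apply: big_ind => //; [exact: subspace0 | exact: subspaceD]. Qed.

Lemma subspace_subr x y : P (x - y) -> P y -> P x.
Proof. by move=> Pxy Py; rewrite -(subrK y x); apply: subspaceD. Qed.

Lemma subspace_addr x y : P (x + y) -> P y -> P x.
Proof. by move=> Pxy Py; rewrite -(addrK y x); apply: subspaceB. Qed.

Lemma subspace_sub_trans x y z : P (x - y) -> P (y - z) -> P (x - z).
Proof. by move=> Pxy Pyz; rewrite -(subrKA y); apply: subspaceD. Qed.

End Subspace.

Lemma binz_0 k : binz k 0 = 1.
Proof. by case: k => a; rewrite /binz ?bin0 ?addn0 ?binn. Qed.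

Lemma binz0S i : binz 0 i.+1 = 0.
Proof. by []. Qed.

Lemma big_ord_head (R : nmodType) (N : nat) (F : 'I_N.+1 -> R) :
  (forall i : 'I_N, F (lift ord0 i) = 0) -> \sum_(i < N.+1) F i = F ord0.
Proof. by move=> F0; rewrite big_ord_recl big1 ?addr0. Qed.

Section VertexAlgebra.
Variables (V : lmodType CC) (Y : V -> V -> int -> V).

Section Linearity.
Hypothesis HL : va_linear Y.

Lemma Y0l v n : Y 0 v n = 0.
Proof.
case: HL => HYl _; have := HYl 1 0 0 v n; rewrite !scale1r addr0 => /esym/eqP.
by rewrite -subr_eq0 addrK => /eqP.
Qed.

Lemma Y0r u n : Y u 0 n = 0.
Proof.
case: HL => _ HYr; have := HYr 1 u 0 0 n; rewrite !scale1r addr0 => /esym/eqP.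
by rewrite -subr_eq0 addrK => /eqP.
Qed.

Lemma YDr u x y n : Y u (x + y) n = Y u x n + Y u y n.
Proof. by case: HL => _ HYr; have := HYr 1 u x y n; rewrite !scale1r. Qed.

Lemma YZr a u x n : Y u (a *: x) n = a *: Y u x n.
Proof. by case: HL => _ HYr; have := HYr a u x 0 n; rewrite Y0r !addr0. Qed.

Lemma YBr u x y n : Y u (x - y) n = Y u x n - Y u y n.
Proof. by rewrite YDr -scaleN1r YZr scaleN1r. Qed.

Lemma YBl u u' x n : Y (u - u') x n = Y u x n - Y u' x n.
Proof. by case: HL => HYl _; rewrite addrC -scaleN1r HYl scaleN1r addrC. Qed.

Lemma YMnr u x k n : Y u (x *+ k) n = Y u x n *+ k.
Proof. by rewrite -scaler_nat YZr scaler_nat. Qed.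

End Linearity.

Lemma C2_subspace : is_subspace (C2 Y).
Proof.
split; first by exists [::]; rewrite big_nil.
move=> a _ _ [s ->] [s' ->]; exists ([seq (a * t.1.1, t.1.2, t.2) | t <- s] ++ s').
rewrite big_cat big_map scaler_sumr; congr (_ + _).
by apply: eq_bigr => t _; rewrite scalerA.
Qed.

Lemma C2_modeN2 u x : C2 Y (Y u x (-2)).
Proof. by exists [:: (1, u, x)]; rewrite big_seq1 scale1r. Qed.

Lemma C2_linear_image (P : V -> Prop) (F : V -> V) :
    is_subspace P -> F 0 = 0 -> (forall a x y, F (a *: x + y) = a *: F x + F y) ->
  (forall u x, P (F (Y u x (-2)))) -> forall z, C2 Y z -> P (F z).
Proof.
move=> HP F0 FZD PF _ [s ->]; elim: s => [|t s IHs]; first by rewrite big_nil F0; apply: subspace0.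
by rewrite big_cons FZD; apply: subspaceD => //; apply: subspaceZ.
Qed.

Variable vac : V.

Lemma r01_of_lsr01 (M : V -> Prop) v : va_vacuum Y vac -> lsr01 Y M v -> r01 Y M v.
Proof.
move=> Hvac /(_ vac)[m Mvac]; exists m => ns ns01 le_mns.
by have := Mvac (-1) ns isT ns01 le_mns; rewrite Hvac.
Qed.

Hypothesis HVA : is_vertex_algebra Y vac.

Let HL : va_linear Y. Proof. by case: HVA. Qed.

Lemma borcherds_large u v w m k n : exists N0 : nat, forall N, (N0 <= N)%N ->
    \sum_(i < N) Y (Y u v (k + i%:Z)) w (m + n - i%:Z) *~ binz m i
    = \sum_(i < N)
        ((Y u (Y v w (n + i%:Z)) (m + k - i%:Z)
          - Y v (Y u w (m + i%:Z)) (n + k - i%:Z) *~ (-1) ^ k)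
         *~ ((-1) ^+ i * binz k i)).
Proof.
have [_ HT _ _ HB] := HVA.
have large a b j : exists N0 : nat, forall i : nat, (N0 <= i)%N -> Y a b (j + i%:Z) = 0.
  by have [N0 HN0] := HT a b; exists `|N0 - j|%N => i Hi; apply: HN0; lia.
have [N1 H1] := large u v k; have [N2 H2] := large v w n; have [N3 H3] := large u w m.
exists (maxn N1 (maxn N2 N3)) => N HN; apply: HB => i Hi.
by split; [apply: H1 | apply: H2 | apply: H3]; lia.
Qed.

Lemma commutator_formula a u x m n : exists N0 : nat, forall N, (N0 <= N)%N ->
  \sum_(i < N) Y (Y a u i%:Z) x (m + n - i%:Z) *~ binz m i
  = Y a (Y u x n) m - Y u (Y a x m) n.
Proof.
have [N0 HN0] := borcherds_large a u x m 0 n.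
exists N0.+1 => -[//|N] HN; move: (HN0 _ (ltnW HN)); under eq_bigr do rewrite add0r.
move=> ->; rewrite big_ord_head => [|i]; last by rewrite lift0 binz0S mulr0 mulr0z.
by rewrite /= bin0 expr0 mulr1 expr0z !mulr1z !addr0 ?subr0.
Qed.

Lemma associator_formula u v w k n : exists N0 : nat, forall N, (N0 <= N)%N ->
  Y (Y u v k) w n
  = \sum_(i < N) ((Y u (Y v w (n + i%:Z)) (k - i%:Z)
                   - Y v (Y u w i%:Z) (n + k - i%:Z) *~ (-1) ^ k) *~ ((-1) ^+ i * binz k i)).
Proof.
have [N0 HN0] := borcherds_large u v w 0 k n.
exists N0.+1 => -[//|N] HN; move: (HN0 _ (ltnW HN)).
rewrite big_ord_head => [|i]; last by rewrite lift0 binz0S mulr0z.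
under eq_bigr do rewrite !add0r.
by rewrite /= bin0 mulr1z !addr0 ?subr0 ?add0r => ->.
Qed.

Definition translation u := Y u vac (-2).

Lemma Y_translation_neg u x (p : nat) :
  Y (translation u) x (- p.+1%:Z) = Y u x (- p.+2%:Z) *~ p.+1.
Proof.
have [_ _ Hvac _ _] := HVA.
have [N0 HN0] := associator_formula u vac x (-2) (- p.+1%:Z).
have Hp : (p < maxn N0 p.+1)%N by rewrite leq_max leqnn orbT.
rewrite /translation (HN0 _ (leq_maxl N0 p.+1)) (big_only1 (Ordinal Hp)) // => [|i ne_ip _].
- rewrite /= !Hvac ifT; last by apply/eqP; lia.
  rewrite ifF; last by apply/negbTE/eqP; lia.
  rewrite mul0rz subr0 /binz /= add1n binSn signrMK.
  by congr (_ *~ _); congr (Y _ _ _); lia.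
- rewrite -val_eqE /= in ne_ip; rewrite !Hvac ifF; last by apply/negbTE/eqP; lia.
  by rewrite ifF ?(Y0r HL) ?mul0rz ?subr0 ?mul0rz //; apply/negbTE/eqP; lia.
Qed.

Lemma C2_mode_leN2 u x n : n <= -2 -> C2 Y (Y u x n).
Proof.
move=> n_le; have [p ->] : exists p : nat, n = - p.+2%:Z by exists (`|n| - 2)%N; lia.
elim: p u x => [|p IHp] u x; first exact: C2_modeN2.
apply: (subspaceMn_inv C2_subspace (n := p.+1)).
by rewrite pmulrn -Y_translation_neg; apply: IHp.
Qed.

Lemma C2_modeL a m z : m <= 0 -> C2 Y z -> C2 Y (Y a z m).
Proof.
move=> m_le Cz; apply: (C2_linear_image (F := fun z => Y a z m)) Cz.
- exact: C2_subspace.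
- exact: Y0r.
- by case: HL.
move=> u x /=; have [N0 HN0] := commutator_formula a u x m (-2).
apply: (subspace_subr C2_subspace (y := Y u (Y a x m) (-2))); last exact: C2_modeN2.
rewrite -(HN0 N0) //; apply: (subspace_sum C2_subspace) => i.
by apply: (subspaceMz C2_subspace); apply: C2_mode_leN2; lia.
Qed.

Lemma C2_modeR w n z : n <= 0 -> C2 Y z -> C2 Y (Y z w n).
Proof.
move=> n_le Cz; apply: (C2_linear_image (F := fun z => Y z w n)) Cz.
- exact: C2_subspace.
- exact: Y0l.
- by case: HL.
move=> u x /=; have [N0 HN0] := associator_formula u x w (-2) n.
rewrite (HN0 N0) //; apply: (subspace_sum C2_subspace) => i.
apply: (subspaceMz C2_subspace); apply: (subspaceB C2_subspace).
- by apply: C2_mode_leN2; lia.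
- by apply: (subspaceMz C2_subspace); apply: C2_mode_leN2; lia.
Qed.

Lemma C2_skew u v k : C2 Y (Y u v (k - 1) - Y v u (k - 1) *~ (-1) ^ k).
Proof.
have [_ _ _ Hcr _] := HVA.
have vac_pos a (i : nat) : Y a vac (-1 + i.+1%:Z) = 0 by apply: (proj2 (Hcr a)); lia.
have [N0 HN0] := borcherds_large u v vac (-1) k (-1).
(* With w the vacuum, the creation property kills all terms but i = 0 on the right. *)
have := HN0 N0.+1 (leqnSn _).
rewrite [X in _ = X -> _]big_ord_head => [|i]; last first.
  by rewrite lift0 !vac_pos !(Y0r HL) mul0rz subr0 mul0rz.
rewrite /= binz_0 mulr1 mulr1z !addr0 (proj1 (Hcr u)) (proj1 (Hcr v)) [-1 + k]addrC => <-.
apply: (subspace_sum C2_subspace) => i.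
by apply: (subspaceMz C2_subspace); apply: C2_mode_leN2; lia.
Qed.

Lemma C2_mulC u v : C2 Y (Y u v (-1) - Y v u (-1)).
Proof. by have := C2_skew u v 0; rewrite expr0z mulr1z. Qed.

Lemma C2_mode0_skew u v : C2 Y (Y u v 0 + Y v u 0).
Proof. by have := C2_skew u v 1; rewrite subrr expr1z mulrN1z opprK. Qed.

Lemma Y_mode0_derivation b u x n :
  Y b (Y u x n) 0 = Y (Y b u 0) x n + Y u (Y b x 0) n.
Proof.
have [N0 HN0] := commutator_formula b u x 0 n.
apply/eqP; rewrite -subr_eq -(HN0 N0.+1) // big_ord_head => [|i].
- by rewrite /= bin0 mulr1z add0r subr0.
- by rewrite lift0 binz0S mulr0z.
Qed.

Lemma C2_mulA u v w : C2 Y (Y (Y u v (-1)) w (-1) - Y u (Y v w (-1)) (-1)).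
Proof.
have [N0 HN0] := associator_formula u v w (-1) (-1).
rewrite (HN0 N0.+1) // big_ord_recl /= bin0 expr0 !mul1r mulr1z exprN1 invrN1 mulrN1z opprK.
rewrite !addr0 ?subr0 addrC -addrA addKr.
apply: (subspaceD C2_subspace); first by apply: C2_mode_leN2.
apply: (subspace_sum C2_subspace) => i; rewrite /bump /=.
apply/(subspaceMz C2_subspace)/(subspaceB C2_subspace); first by apply: C2_mode_leN2; lia.
by apply: (subspaceMz C2_subspace); apply: C2_mode_leN2; lia.
Qed.

Lemma C2_mulCA a v y : C2 Y (Y v (Y a y (-1)) (-1) - Y a (Y v y (-1)) (-1)).
Proof.
apply: (subspace_sub_trans C2_subspace (y := Y (Y v a (-1)) y (-1))).
  by rewrite -opprB; apply: (subspaceN C2_subspace); apply: C2_mulA.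
apply: (subspace_sub_trans C2_subspace (y := Y (Y a v (-1)) y (-1))); last exact: C2_mulA.
by rewrite -(YBl HL); apply: C2_modeR => //; apply: C2_mulC.
Qed.

(* [npow v t] is v_{-1} ... v_{-1} v with t factors v_{-1}, i.e. v^{t+1}. *)
Definition npow v t := iter_prod Y v (nseq t (-1)).

Lemma npowS v t : npow v t.+1 = Y v (npow v t) (-1).
Proof. by []. Qed.

Lemma C2_mode0_npow b v t :
  C2 Y (Y b (npow v t.+1) 0 - Y (Y b v 0) (npow v t) (-1) *+ t.+2).
Proof.
elim: t => [|t IHt].
  by rewrite npowS Y_mode0_derivation mulr2n [_ + Y v _ _]addrC addrKA; apply: C2_mulC.
rewrite npowS Y_mode0_derivation mulrS [_ + Y v _ _]addrC addrKA.
apply: (subspace_sub_trans C2_subspace (y := Y v (Y (Y b v 0) (npow v t) (-1)) (-1) *+ t.+2)).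
  by rewrite -(YMnr HL) -(YBr HL); apply: C2_modeL.
by rewrite -mulrnBl; apply: (subspaceMn C2_subspace); apply: C2_mulCA.
Qed.

Lemma C2_mode0_npow_diag v t : C2 Y (Y v (npow v t) 0).
Proof.
have Cvv : C2 Y (Y v v 0).
  by apply: (subspaceMn_inv C2_subspace (n := 1)); rewrite mulr2n; apply: C2_mode0_skew.
case: t => [//|t]; apply: (subspace_subr C2_subspace (C2_mode0_npow v v t)).
by apply: (subspaceMn C2_subspace); apply: C2_modeR.
Qed.

Lemma iter_prod01_C2_or_npow v ns : all in01 ns ->
  C2 Y (iter_prod Y v ns) \/ iter_prod Y v ns = npow v (size ns).
Proof.
elim: ns => [|n ns IHns]; first by right.
rewrite /= => /andP[/orP[]/eqP-> /IHns[Cns|->]].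
- by left; apply: C2_modeL.
- by left; apply: C2_mode0_npow_diag.
- by left; apply: C2_modeL.
- by right.
Qed.

Lemma in01_le0 n : in01 n -> n <= 0.
Proof. by case/orP=> /eqP->. Qed.

Section QuotientIdeal.
Variable M : V -> Prop.
Hypotheses (HM : is_subspace M) (HC2 : forall x, C2 Y x -> M x) (Hid : quotient_ideal Y M).

Lemma M_mod_C2 x y : C2 Y (x - y) -> M y -> M x.
Proof. by move=> /HC2; apply: (subspace_subr HM). Qed.

Lemma M_mulL a x : M x -> M (Y a x (-1)).
Proof. by case/(Hid a) => x' [Mx' Cx']; apply: (M_mod_C2 Cx'). Qed.

Lemma M_mulR a x : M x -> M (Y x a (-1)).
Proof. by move=> Mx; apply: (M_mod_C2 (C2_mulC x a)); apply: M_mulL. Qed.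

Variables (v : V) (m : nat).
Hypothesis Mpow : forall t, (m <= t)%N -> M (npow v t).

Lemma M_mode0_npow b t : (m < t)%N -> M (Y b (npow v t) 0).
Proof.
case: t => [//|t] lt_mt; apply: (M_mod_C2 (C2_mode0_npow b v t)).
by apply: (subspaceMn HM); apply/M_mulL/Mpow.
Qed.

Lemma lsr01_of_npow : lsr01 Y M v.
Proof.
move=> b; exists m.+1 => s ns s01 /(iter_prod01_C2_or_npow v)[Cns|->] lt_mns.
  by apply/HC2/C2_modeL => //; apply: in01_le0.
case/orP: s01 => /eqP->; first exact: M_mode0_npow.
exact/M_mulL/Mpow/ltnW.
Qed.

Lemma rsr01_of_npow : rsr01 Y M v.
Proof.
move=> w; exists m.+1 => n ns n01 /(iter_prod01_C2_or_npow v)[Cns|->] lt_mns.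
  by apply/HC2/C2_modeR => //; apply: in01_le0.
case/orP: n01 => /eqP->; last exact/M_mulR/Mpow/ltnW.
apply: (subspace_addr HM (y := Y w (npow v (size ns)) 0)); first exact/HC2/C2_mode0_skew.
exact: M_mode0_npow.
Qed.

End QuotientIdeal.

End VertexAlgebra.

Unset Implicit Arguments.

Theorem mainTheorem9 (V : lmodType CC) (Y : V -> V -> int -> V) (vac : V)
  (HVA : is_vertex_algebra Y vac)
  (M : V -> Prop) (HM : is_subspace M)
  (HC2 : forall x, C2 Y x -> M x)
  (Hid : quotient_ideal Y M) :
  MZ01_subspace Y M.
Proof.
move=> v; split=> [[m Mr] | [Ml _]]; last by case: HVA => _ _ Hvac _ _; exact: r01_of_lsr01 Hvac Ml.
have Mpow t : (m <= t)%N -> M (npow Y v t).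
  by move=> le_mt; apply: Mr; rewrite ?size_nseq // all_nseq orbT.
exact: conj (lsr01_of_npow HVA HM HC2 Hid Mpow) (rsr01_of_npow HVA HM HC2 Hid Mpow).
Qed.
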